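(* Let $F$ be a $\Theta$-graph of order $\ell$ (so $\ell\ge 4$), and let $t$ be an odd integer with $1\le t<\ell$. Let $A\cup B$ be a partition of $V(F)$ with $A\ne\emptyset$ such that every path of length $t$ in $F$ that starts at a vertex of $A$ ends at a vertex of $A$. Then $A=V(F)$.
   Context: A $\Theta$-graph of order $\ell$ ($\ell\ge 4$) is a cycle of length $\ell$ together with one chord (an additional edge joining two non-consecutive vertices of the cycle), on exactly $\ell$ vertices. A path of length $t$ is a path with $t$ edges (and $t+1$ distinct vertices). *)

From mathcomp Require Import all_boot.
Set Implicit Arguments. Unset Strict Implicit. Unset Printing Implicit Defensive.

(* A finite simple graph is given by an edge relation e on a finType T
   (vertex set V(F) = T). *)

(* [cycle_adj s u v]: u and v are consecutive on the cycle whose vertices,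
   in cyclic order, are listed by s (path.v's [next]). *)
Definition cycle_adj (T : eqType) (s : seq T) (u v : T) : bool :=
  (u \in s) && (v \in s) && ((next s u == v) || (next s v == u)).

(* e is a Theta-graph of order l: T has exactly l >= 4 vertices, which can be
   listed as a Hamiltonian cycle s, and e consists of the cycle edges together
   with exactly one chord {x, y}, x, y non-consecutive on the cycle. *)
Definition is_theta_graph (T : finType) (e : rel T) (l : nat) : Prop :=
  4 <= l /\ #|T| = l /\
  exists (s : seq T) (x y : T),
    [/\ uniq s, size s = l, (forall v : T, v \in s),
        (x != y) && ~~ cycle_adj s x y &
        (forall u v : T, e u v = cycle_adj s u v || ((u == x) && (v == y))
                                                || ((u == y) && (v == x)))].

Definition is_path_of_length (T : eqType) (e : rel T) (t : nat) (x : T) (p : seq T) : bool :=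
  [&& size p == t, uniq (x :: p) & path e x p].

From mathcomp Require Import all_boot all_algebra zify.
Set Implicit Arguments. Unset Strict Implicit. Unset Printing Implicit Defensive.
Import GRing.Theory Num.Theory.

(* Label the vertices of the Hamiltonian cycle by integers modulo l so that the
   chord joins 0 and k, and let P z say that vertex z lies in A.  A path of
   length t from z to z' gives P z -> P z', and the reversed path the converse.
   Paths along the cycle make P t-periodic, hence g-periodic for g = gcd(l, t).
   Paths through the chord make P symmetric about (k - 1)/2 and about (k + 1)/2;
   each symmetry only needs checking on one window whose width is a period of P
   (g, or k - 1 when k < g).  Composing the two symmetries, P is 2-periodic, and
   g is odd, so P is constant.  Naming the chord endpoints suitably gives
   g <= l - k, which is what makes the windows fit. *)

Lemma last_iota (m n : nat) : last m (iota m.+1 n) = m + n.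
Proof. by elim: n m => [|n IHn] m /=; rewrite ?addn0 ?IHn ?addnS. Qed.

Lemma path_iota (r : rel nat) (m n : nat) :
  (forall i, m <= i < m + n -> r i i.+1) -> path r m (iota m.+1 n).
Proof.
elim: n m => [|n IHn] m r_step //=.
rewrite r_step ?IHn //; last by lia.
by move=> i i_in; apply: r_step; lia.
Qed.

Lemma gcdz_bounds_odd (n t : nat) : 0 < t -> t < n -> odd t ->
  [/\ (0 < gcdz n t)%R, (gcdz n t <= t%:Z)%R, (gcdz n t <= n%:Z - t%:Z)%R & odd `|gcdz n t|].
Proof.
rewrite /gcdz /= => t_gt0 t_lt t_odd; have d_t : gcdn n t %| t := dvdn_gcdr n t.
have d_le_nt : gcdn n t <= n - t.
  by apply: dvdn_leq; [lia | apply: dvdn_sub; [exact: dvdn_gcdl | exact: d_t]].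
have d_gt0 : 0 < gcdn n t by rewrite gcdn_gt0 t_gt0 orbT.
have := dvdn_leq t_gt0 d_t; split; try lia.
by move: t_odd; rewrite -{1}(divnK d_t) oddM => /andP[].
Qed.

Lemma next_nth_uniq (T : eqType) (x0 : T) (s : seq T) (r : nat) :
  uniq s -> r < size s -> next s (nth x0 s r) = nth x0 s (r.+1 %% size s).
Proof.
case: s => // y p s_uniq r_lt; rewrite next_nth mem_nth // index_uniq //=.
move: r_lt => /= r_lt.
case: (ltnP r (size p)) => [r_lt'|r_ge].
  by rewrite modn_small //; apply: set_nth_default.
have -> : r = size p by lia.
by rewrite modnn nth_default.
Qed.

Local Open Scope ring_scope.

Definition periodic (X : Type) (f : int -> X) (a : int) : Prop :=
  forall z, f (z + a) = f z.

Definition mirror (X : Type) (f : int -> X) (c : int) : Prop :=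
  forall z, f z = f (c - z).

Section Periodic.
Variable X : Type.
Implicit Types f h : int -> X.

Lemma periodicMz f (a n : int) : periodic f a -> periodic f (n * a).
Proof.
move=> fa.
have fMn (m : nat) z : f (z + m%:Z * a) = f z.
  elim: m z => [|m IHm] z; first by rewrite mul0r addr0.
  by rewrite -addn1 PoszD mulrDl mul1r addrA fa IHm.
case: n => m z; first exact: fMn.
by rewrite -(fMn m.+1 (z + Negz m * a)) NegzE mulNr addrNK.
Qed.

Lemma periodic_gcdz f (a b : int) : periodic f a -> periodic f b -> periodic f (gcdz a b).
Proof.
move=> fa fb z; have [u [v <-]] := Bezoutz a b.
by rewrite addrA (periodicMz v fb) (periodicMz u fa).
Qed.

Lemma eq_periodic_window f h (p lo : int) : 0 < p ->
  periodic f p -> periodic h p -> (forall z, lo <= z < lo + p -> f z = h z) ->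
  f =1 h.
Proof.
move=> p_gt0 fp hp fh z; set q := ((z - lo) %/ p)%Z.
have r_ge0 := modz_ge0 (z - lo) (lt0r_neq0 p_gt0).
have r_lt := ltz_pmod (z - lo) p_gt0.
have z_eq := divz_eq (z - lo) p.
rewrite -(periodicMz (- q) fp) -(periodicMz (- q) hp).
by apply: fh; rewrite mulNr; lia.
Qed.

Lemma periodic_window f (p lo d : int) : 0 < p -> periodic f p ->
  (forall z, lo <= z < lo + p -> f (z + d) = f z) -> periodic f d.
Proof.
move=> p_gt0 fp; apply: eq_periodic_window => // z.
by rewrite -addrAC fp.
Qed.

Lemma mirror_window f (p lo c : int) : 0 < p -> periodic f p ->
  (forall z, lo <= z < lo + p -> f z = f (c - z)) -> mirror f c.
Proof.
move=> p_gt0 fp; apply: eq_periodic_window => // z.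
by rewrite /= -(fp (c - (z + p))); congr f; lia.
Qed.

Lemma mirror_periodic f (c c' : int) : mirror f c -> mirror f c' -> periodic f (c' - c).
Proof. by move=> fc fc' z; rewrite fc' [RHS]fc; congr f; lia. Qed.

Lemma periodic1_const f : periodic f 1 -> forall z, f z = f 0.
Proof. by move=> f1 z; rewrite -[z]mulr1 -[in LHS](add0r (z * 1)) periodicMz. Qed.

End Periodic.

Section CycleIndexing.
Variables (T : eqType) (x0 : T) (s : seq T).
Hypothesis s_uniq : uniq s.
Hypothesis s_gt0 : (0 < size s)%N.
Local Notation L := (Posz (size s)).

Definition cyc (z : int) : T := nth x0 s `|(z %% L)%Z|.

Lemma cyc_mod (z q : int) (r : nat) : (r < size s)%N -> z = q * L + r%:Z -> cyc z = nth x0 s r.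
Proof. by move=> r_lt ->; rewrite /cyc modzMDl modz_small //; lia. Qed.

Lemma cyc_index_mod (z : int) :
  (`|(z %% L)%Z| < size s)%N /\ z = (z %/ L)%Z * L + `|(z %% L)%Z|%:Z.
Proof.
have L_neq0 : L != 0 by lia.
have r_ge0 := modz_ge0 z L_neq0; have r_lt := ltz_pmod z (ltac:(lia) : 0 < L).
rewrite gez0_abs //; split; [lia | exact: divz_eq].
Qed.

Lemma cyc_periodic : periodic cyc L.
Proof. by move=> z; rewrite /cyc modzDr. Qed.

Lemma next_cyc z : next s (cyc z) = cyc (z + 1).
Proof.
have [r_lt z_eq] := cyc_index_mod z.
rewrite {1}/cyc; move: (absz _) r_lt z_eq => r r_lt z_eq.
rewrite next_nth_uniq //.
rewrite (@cyc_mod _ ((z %/ L)%Z + (r.+1 %/ size s)%N%:Z) (r.+1 %% size s)) ?ltn_pmod //.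
have := divn_eq r.+1 (size s); move: (z %/ L)%Z z_eq => q z_eq; nia.
Qed.

Lemma cyc_inj_window (lo a b : int) :
  lo <= a < lo + L -> lo <= b < lo + L -> cyc a = cyc b -> a = b.
Proof.
have [ra_lt a_eq] := cyc_index_mod a; have [rb_lt b_eq] := cyc_index_mod b.
move=> a_in b_in /eqP; rewrite /cyc nth_uniq // => /eqP r_eq.
rewrite r_eq in a_eq.
suff : (a %/ L)%Z = (b %/ L)%Z by lia.
apply/eqP; rewrite -subr_eq0; apply/eqP; nia.
Qed.

Lemma cyc_index u : u \in s -> cyc (index u s) = u.
Proof. by move=> u_in; rewrite (@cyc_mod _ 0 (index u s)) ?nth_index ?index_mem //; lia. Qed.

End CycleIndexing.

Section ThetaWalks.
Variables (T : eqType) (e : rel T) (s : seq T) (x y : T).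
Hypothesis s_uniq : uniq s.
Hypothesis mem_s : forall v, v \in s.
Hypothesis neq_xy : x != y.
Hypothesis nadj_xy : ~~ cycle_adj s x y.
Hypothesis e_sym : symmetric e.
Hypothesis e_next : forall u, e u (next s u).
Hypothesis e_xy : e x y.

Local Notation L := (Posz (size s)).

Lemma size_s_gt0 : (0 < size s)%N.
Proof. by case: s (mem_s x). Qed.

Definition vert (z : int) : T := cyc x s ((index x s)%:Z + z).

Definition chord_span : int := (((index y s)%:Z - (index x s)%:Z) %% L)%Z.
Local Notation k := chord_span.

Lemma vert_periodic : periodic vert L.
Proof. by move=> z; rewrite /vert addrA cyc_periodic. Qed.

Lemma vert_step z : e (vert z) (vert (z + 1)).
Proof. by rewrite /vert addrA -next_cyc ?size_s_gt0. Qed.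

Lemma vert_inj_window (lo a b : int) :
  lo <= a < lo + L -> lo <= b < lo + L -> vert a = vert b -> a = b.
Proof.
move=> a_in b_in ab_eq.
have : (index x s)%:Z + a = (index x s)%:Z + b.
  apply: (cyc_inj_window s_uniq size_s_gt0 (lo := (index x s)%:Z + lo)) ab_eq; lia.
lia.
Qed.

Lemma vert0 : vert 0 = x.
Proof. by rewrite /vert addr0 cyc_index. Qed.

Lemma vert_chord_span : vert k = y.
Proof.
have := divz_eq ((index y s)%:Z - (index x s)%:Z) L.
rewrite /vert /chord_span; move: (_ %/ _)%Z (_ %% _)%Z => q r yx_eq.
rewrite (@cyc_mod _ x s _ (- q) (index y s)) ?nth_index ?index_mem //; lia.
Qed.

Lemma cycle_adj_sym u v : cycle_adj s u v = cycle_adj s v u.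
Proof. by rewrite /cycle_adj [(u \in s) && _]andbC orbC. Qed.

Lemma chord_span_bounds : 2 <= k <= L - 2.
Proof.
have L_neq0 : L != 0 by have := size_s_gt0; lia.
have k_ge0 := modz_ge0 ((index y s)%:Z - (index x s)%:Z) L_neq0.
have k_lt := ltz_pmod ((index y s)%:Z - (index x s)%:Z) (ltac:(lia) : 0 < L).
rewrite -/k in k_ge0 k_lt.
have := negbTE nadj_xy; rewrite /cycle_adj !mem_s /= => adj_xy.
have k_neq0 : k != 0.
  by apply: contraNneq neq_xy => k0; rewrite -vert0 -vert_chord_span k0.
have k_neq1 : k != 1.
  apply: contraFneq adj_xy => k1.
  by rewrite -vert0 -vert_chord_span k1 /vert addr0 next_cyc ?size_s_gt0 ?eqxx.
have k_neqLm1 : k != L - 1.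
  apply: contraFneq adj_xy => kL1.
  rewrite -vert0 -vert_chord_span kL1 /vert !next_cyc ?size_s_gt0 //.
  have -> : (index x s)%:Z + (L - 1) + 1 = (index x s)%:Z + 0 + L by lia.
  by rewrite cyc_periodic eqxx orbT.
lia.
Qed.

Definition theta_step (a b : int) : bool :=
  [|| b == a + 1, a == b + 1, (a == 0) && (b == k) | (a == k) && (b == 0)].

Lemma theta_step_sym a b : theta_step a b = theta_step b a.
Proof.
by rewrite /theta_step; case: (b == a + 1); case: (a == b + 1);
  case: (a == 0); case: (b == k); case: (a == k); case: (b == 0).
Qed.

Lemma theta_step_edge a b : theta_step a b -> e (vert a) (vert b).
Proof.
have e_chord : e (vert 0) (vert k) by rewrite vert0 vert_chord_span.
rewrite /theta_step => /or4P[/eqP->|/eqP->|/andP[/eqP-> /eqP->]|/andP[/eqP-> /eqP->]].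
- exact: vert_step.
- by rewrite e_sym vert_step.
- exact: e_chord.
- by rewrite e_sym.
Qed.

Variable t : nat.

Definition theta_walk (f : nat -> int) (lo : int) : Prop :=
  [/\ forall i, (i < t)%N -> theta_step (f i) (f i.+1),
      forall i, (i <= t)%N -> lo <= f i < lo + L &
      forall i j, (i <= t)%N -> (j <= t)%N -> f i = f j -> i = j].

Lemma theta_walk_rev f lo : theta_walk f lo -> theta_walk (fun i => f (t - i)%N) lo.
Proof.
case=> f_step f_window f_inj; split.
- by move=> i i_lt; rewrite theta_step_sym -[(t - i)%N]subnSK //; apply: f_step; lia.
- by move=> i i_le; apply: f_window; lia.
- by move=> i j i_le j_le /f_inj; lia.
Qed.

Lemma theta_walk_path f lo : theta_walk f lo ->
  is_path_of_length e t (vert (f 0%N)) [seq vert (f i) | i <- iota 1 t].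
Proof.
case=> f_step f_window f_inj; pose g i := vert (f i).
rewrite /is_path_of_length size_map size_iota eqxx andTb; apply/andP; split.
  rewrite -[_ :: _]/(map g (iota 0 t.+1)) map_inj_in_uniq ?iota_uniq //.
  move=> i j; rewrite !mem_iota => i_lt j_lt /vert_inj_window fij.
  by apply: f_inj; [lia | lia | apply: fij; apply: f_window; lia].
rewrite (@path_map _ _ g e 0%N).
by apply: path_iota => i i_lt; apply: theta_step_edge; apply: f_step; lia.
Qed.

Variables (pT : predType T) (A : pT).
Hypothesis A_closed :
  forall u p, u \in A -> is_path_of_length e t u p -> last u p \in A.

Definition inA (z : int) : bool := vert z \in A.

Lemma theta_walk_inA f lo : theta_walk f lo -> inA (f 0%N) = inA (f t).
Proof.
have inA_last h : theta_walk h lo -> inA (h 0%N) -> inA (h t).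
  move=> h_walk /A_closed/(_ (theta_walk_path h_walk)).
  by rewrite (last_map (fun i => vert (h i)) _ 0%N) last_iota.
move=> f_walk; apply/idP/idP; first exact: inA_last.
by have := inA_last _ (theta_walk_rev f_walk); rewrite /= subn0 subnn.
Qed.

Hypothesis t_gt0 : (0 < t)%N.
Hypothesis t_lt : (t < size s)%N.
Hypothesis t_odd : odd t.

Ltac solve_theta_walk f :=
  have := chord_span_bounds; move=> ?;
  split; rewrite /f; [move=> ? ? | move=> ? ? | move=> ? ? ? ?];
  try rewrite /theta_step; repeat case: ifP => [?|/negbT ?];
  first [ lia
        | apply/or4P; apply: Or41; apply/eqP; lia
        | apply/or4P; apply: Or42; apply/eqP; lia
        | apply/or4P; apply: Or43; apply/andP; split; apply/eqP; lia ].

Lemma inA_periodic_t : periodic inA t.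
Proof.
move=> z; pose f (i : nat) := z + i%:Z.
have [f0 ft] : f 0%N = z /\ f t = z + t%:Z by rewrite /f; split; lia.
by rewrite -ft -f0; symmetry; apply: (theta_walk_inA (lo := z)); solve_theta_walk f.
Qed.

Lemma chord_walk_up_down (j : int) :
  0 <= j -> t%:Z - k <= j -> j <= L - k - 1 -> j <= t%:Z - 1 ->
  inA (- j) = inA (k + j + 1 - t%:Z).
Proof.
move=> *; pose f (i : nat) := if i%:Z <= j then - j + i%:Z else k + j + 1 - i%:Z.
have [f0 ft] : f 0%N = - j /\ f t = k + j + 1 - t%:Z by rewrite /f; split; case: ifP; lia.
by rewrite -ft -f0; apply: (theta_walk_inA (lo := - j)); solve_theta_walk f.
Qed.

Lemma chord_walk_down_up (j : int) :
  0 <= j -> j <= k - 1 -> j <= t%:Z - 1 -> t%:Z - 1 - j <= L - k - 1 ->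
  inA j = inA (k + t%:Z - 1 - j).
Proof.
move=> *; pose f (i : nat) := if i%:Z <= j then j - i%:Z else k + i%:Z - j - 1.
have [f0 ft] : f 0%N = j /\ f t = k + t%:Z - 1 - j by rewrite /f; split; case: ifP; lia.
by rewrite -ft -f0; apply: (theta_walk_inA (lo := 0)); solve_theta_walk f.
Qed.

Lemma chord_walk_up_up (j : int) :
  0 <= j -> j <= t%:Z - 1 -> t%:Z <= L - k ->
  inA (- j) = inA (k + t%:Z - 1 - j).
Proof.
move=> *; pose f (i : nat) := if i%:Z <= j then - j + i%:Z else k + i%:Z - j - 1.
have [f0 ft] : f 0%N = - j /\ f t = k + t%:Z - 1 - j by rewrite /f; split; case: ifP; lia.
by rewrite -ft -f0; apply: (theta_walk_inA (lo := - j)); solve_theta_walk f.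
Qed.

Local Notation g := (gcdz L t).

Lemma inA_periodic_gcd : periodic inA g.
Proof.
apply: periodic_gcdz inA_periodic_t.
by move=> z; rewrite /inA vert_periodic.
Qed.

Lemma inA_mirror_pred (p lo : int) : 0 < p -> periodic inA p ->
  0 <= lo -> t%:Z - (L - k) <= lo -> lo + p <= k -> lo + p <= t%:Z ->
  mirror inA (k - 1).
Proof.
move=> p_gt0 p_per *; apply: (mirror_window (lo := lo) p_gt0 p_per) => z z_in.
rewrite chord_walk_down_up; try lia.
by rewrite -[RHS]inA_periodic_t; congr inA; lia.
Qed.

Lemma inA_mirror_succ (p lo : int) : 0 < p -> periodic inA p ->
  0 <= lo -> t%:Z - k <= lo -> lo + p <= L - k -> lo + p <= t%:Z ->
  mirror inA (k + 1).
Proof.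
move=> p_gt0 p_per *; apply: (mirror_window (lo := 1 - lo - p) p_gt0 p_per) => z z_in.
rewrite -[z]opprK chord_walk_up_down; try lia.
by rewrite -[LHS]inA_periodic_t; congr inA; lia.
Qed.

Lemma inA_periodic2_wide : g <= k -> g <= L - k -> periodic inA 2.
Proof.
move=> g_le_k g_le_Lk; have [g_gt0 g_le_t g_le_Lt _] := gcdz_bounds_odd t_gt0 t_lt t_odd.
have g_per := inA_periodic_gcd.
rewrite (_ : 2 = k + 1 - (k - 1)); last by lia.
apply: mirror_periodic.
  case: (lerP t%:Z (L - k)) => ?.
    by apply: (inA_mirror_pred (lo := 0) g_gt0 g_per); lia.
  by apply: (inA_mirror_pred (lo := t%:Z - (L - k)) g_gt0 g_per); lia.
case: (lerP t%:Z k) => ?.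
  by apply: (inA_mirror_succ (lo := 0) g_gt0 g_per); lia.
by apply: (inA_mirror_succ (lo := t%:Z - k) g_gt0 g_per); lia.
Qed.

Lemma inA_periodic2_narrow : k < g -> periodic inA 2.
Proof.
move=> k_lt_g; have [g_gt0 g_le_t g_le_Lt _] := gcdz_bounds_odd t_gt0 t_lt t_odd.
have k_bnd := chord_span_bounds.
(* The windows of width g do not fit; walks entering and leaving the chord
   upwards give the smaller period k - 1. *)
have km1_per : periodic inA (k - 1).
  apply: (periodic_window (lo := 1 - g) g_gt0 inA_periodic_gcd) => z z_in.
  rewrite -[z]opprK chord_walk_up_up; try lia.
  by rewrite -[LHS]inA_periodic_t; congr inA; lia.
have km1_gt0 : 0 < k - 1 by lia.
rewrite (_ : 2 = k + 1 - (k - 1)); last by lia.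
apply: mirror_periodic.
  by apply: (inA_mirror_pred (lo := 0) km1_gt0 km1_per); lia.
by apply: (inA_mirror_succ (lo := t%:Z - k + 1) km1_gt0 km1_per); lia.
Qed.

Lemma inA_periodic2 : g <= L - k -> periodic inA 2.
Proof.
move=> g_le_Lk; case: (ltrP k g) => [k_lt_g|g_le_k].
  exact: inA_periodic2_narrow.
exact: inA_periodic2_wide.
Qed.

Lemma vert_index u : vert ((index u s)%:Z - (index x s)%:Z) = u.
Proof. by rewrite /vert addrC subrK cyc_index. Qed.

Lemma theta_closed_all : g <= L - k -> forall u v, u \in A -> v \in A.
Proof.
move=> g_le_Lk u v.
have [_ _ _ g_odd] := gcdz_bounds_odd t_gt0 t_lt t_odd.
have one_per : periodic inA 1.
  have -> : 1 = gcdz 2 g by rewrite /gcdz /= (eqP (_ : coprime 2 _)) ?coprime2n.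
  exact: periodic_gcdz (inA_periodic2 g_le_Lk) inA_periodic_gcd.
rewrite -(vert_index u) -(vert_index v) -!/(inA _) (periodic1_const one_per).
by rewrite -(periodic1_const one_per ((index v s)%:Z - (index x s)%:Z)).
Qed.

End ThetaWalks.

Lemma chord_span_swap (T : eqType) (s : seq T) (x y : T) :
  (forall v, v \in s) -> x != y ->
  chord_span s x y + chord_span s y x = size s.
Proof.
move=> mem_s neq_xy; rewrite /chord_span -opprB.
set m := _ - _; set L := Posz (size s).
have L_gt0 : 0 < L by have := @size_s_gt0 _ s x mem_s; lia.
have m_mod_neq0 : (m %% L)%Z != 0.
  apply: contraNneq neq_xy => m_mod0.
  have ix_lt : (index x s < size s)%N by rewrite index_mem.
  have iy_lt : (index y s < size s)%N by rewrite index_mem.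
  have := divz_eq m L; rewrite m_mod0 addr0 /m; move: (_ %/ _)%Z => q m_eq.
  have q0 : q = 0 by nia.
  by apply/eqP; apply: index_inj; rewrite ?mem_s //; lia.
have r_ge0 := modz_ge0 m (lt0r_neq0 L_gt0); have r_lt := ltz_pmod m L_gt0.
have -> : - m = (- (m %/ L)%Z - 1) * L + (L - (m %% L)%Z) by rewrite {1}(divz_eq m L); lia.
by rewrite modzMDl modz_small; lia.
Qed.

Local Close Scope ring_scope.

Theorem corollary5p1 (T : finType) (e : rel T) (l t : nat) (A : {set T}) :
  is_theta_graph e l ->
  odd t -> 1 <= t -> t < l ->
  A != set0 ->
  (forall (x : T) (p : seq T), x \in A -> is_path_of_length e t x p -> last x p \in A) ->
  A = [set: T].
Proof.
move=> [_ [_ [s [x [y [s_uniq size_s mem_s /andP[neq_xy nadj_xy] e_def]]]]]].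
move=> t_odd t_gt0 t_lt /set0Pn[v v_in] A_closed; rewrite -size_s in t_lt.
have e_sym : symmetric e.
  move=> u w; rewrite !e_def cycle_adj_sym.
  by case: (cycle_adj s w u); case: (u == x); case: (u == y); case: (w == x); case: (w == y).
have e_next u : e u (next s u) by rewrite e_def /cycle_adj !mem_s eqxx.
have e_xy : e x y by rewrite e_def !eqxx orbT.
have [_ g_le_t g_le_Lt _] := gcdz_bounds_odd t_gt0 t_lt t_odd.
apply/setP => u; rewrite inE.
case: (lerP (gcdz (size s) t) ((size s)%:Z - chord_span s x y)%R).
  move=> g_le_Lk.
  exact (theta_closed_all s_uniq mem_s neq_xy nadj_xy e_sym e_next e_xy
    A_closed t_gt0 t_lt t_odd g_le_Lk u v_in).
(* Since [2 g <= size s], the chord seen from [y] spans at least [g]. *)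
move=> g_gt_Lk; have g_le_Lk' : (gcdz (size s) t <= (size s)%:Z - chord_span s y x)%R.
  by move: (chord_span_swap mem_s neq_xy) g_le_t g_le_Lt g_gt_Lk; set n := size s; lia.
have neq_yx : y != x by rewrite eq_sym.
have nadj_yx : ~~ cycle_adj s y x by rewrite cycle_adj_sym.
have e_yx : e y x by rewrite e_sym.
exact (theta_closed_all s_uniq mem_s neq_yx nadj_yx e_sym e_next e_yx
  A_closed t_gt0 t_lt t_odd g_le_Lk' u v_in).
Qed.
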